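(* Let $k\ge2$, $n>2^k$, $c=2^k-2$, and assume $d=\gcd(c,n-1)>1$; let $w=(n-1)/d$ and let $y_v=0$ if $v$ is a multiple of $d$ and $y_v=\frac{1}{w(d-1)}$ otherwise, for $v\in V=\{0,\dots,n-1\}$. Then for every $v\in V$ and every integer $1\le\ell\le n-1$, $$y([v\oplus\ell]_{n-1})=\frac{\ell-\lfloor\ell/d\rfloor}{w(d-1)}\quad\text{or}\quad y([v\oplus\ell]_{n-1})=\frac{\ell-\lceil\ell/d\rceil}{w(d-1)}.$$
   Context: For integers $u,\ell$ and $r\ge1$, $[u\oplus\ell]_r=\{w\bmod r: u\le w\le u+\ell-1\}$ (empty if $\ell\le0$). For $S\subseteq V$, $y(S)=\sum_{v\in S}y_v$. *)

From mathcomp Require Import all_boot all_order all_algebra.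
Set Implicit Arguments. Unset Strict Implicit. Unset Printing Implicit Defensive.
Import Order.TTheory GRing.Theory Num.Theory.

(* [u (+) l]_r = { w mod r : u <= w <= u + l - 1 }, viewed as a subset of
   V = {0,...,n-1} = 'I_n (empty if l = 0). *)
Definition cyc_interval (n u l r : nat) : {set 'I_n} :=
  [set x : 'I_n | has (fun w => w %% r == (x : nat)) (iota u l)].

Definition yvec (d w : nat) (v : nat) : rat :=
  if (d %| v)%N then 0%R else (1 / (w * (d - 1))%:R)%R.

Definition ysum (n d w : nat) (S : {set 'I_n}) : rat :=
  (\sum_(x in S) yvec d w x)%R.

Definition ceil_div (l d : nat) : nat := (l + d - 1) %/ d.

(* The map w |-> w mod (n-1) is injective on any window of at most n-1
   consecutive integers, so y([v (+) l]_(n-1)) is the sum of y over the window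
   itself; since d divides n-1, y_(w mod (n-1)) vanishes exactly when d | w.
   Hence y([v (+) l]_(n-1)) = (l - m) / (w(d-1)), where m is the number of
   multiples of d in [v, v + l).  Counting multiples of d below N gives
   ceil(N/d), so m = ceil((v+l)/d) - ceil(v/d), which is floor(l/d) or
   ceil(l/d) according to whether the remainders carry. *)
From mathcomp Require Import all_boot all_order all_algebra.
From mathcomp Require Import zify.
Import GRing.Theory.

Lemma ceil_divE l d : 0 < d -> ceil_div l d = l %/ d + ~~ (d %| l).
Proof.
move=> d_gt0; have d1_lt : d.-1 < d by lia.
rewrite /ceil_div -addnBA // subn1 divnD // [d.-1 %/ d]divn_small //.
rewrite [d.-1 %% d]modn_small // addn0 /dvdn.
by case: (l %% d) => [|r] /=; lia.
Qed.

Lemma ceil_divS N d : 0 < d -> ceil_div N.+1 d = ceil_div N d + (d %| N).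
Proof.
move=> d_gt0; rewrite !ceil_divE // divnS //.
by case: (d %| N.+1); case: (d %| N) => /=; lia.
Qed.

Lemma count_dvdn_iota0 d N : 0 < d -> count (dvdn d) (iota 0 N) = ceil_div N d.
Proof.
move=> d_gt0; elim: N => [|N IHN]; first by rewrite ceil_divE // div0n dvdn0.
by rewrite -addn1 iotaD count_cat IHN /= addn0 addn1 ceil_divS.
Qed.

Lemma ceil_divD_sub u l d : 0 < d ->
  ceil_div (u + l) d - ceil_div u d = l %/ d \/
  ceil_div (u + l) d - ceil_div u d = ceil_div l d.
Proof.
move=> d_gt0.
have -> : ceil_div (u + l) d =
    ceil_div u d + l %/ d + (d <= (u + d.-1) %% d + l %% d).
  by rewrite /ceil_div -!addnBA // !subn1 addnAC divnD.
rewrite [ceil_div l d]ceil_divE // -addnA addKn /dvdn.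
case: leqP => [carry|_]; [right | by left; rewrite addn0].
have := ltn_pmod (u + d.-1) d_gt0.
by case: (l %% d) carry => [|r] /=; lia.
Qed.

Lemma count_dvdn_iota d u l : 0 < d ->
  count (dvdn d) (iota u l) = l %/ d \/ count (dvdn d) (iota u l) = ceil_div l d.
Proof.
move=> d_gt0.
have ceil_uD : ceil_div (u + l) d = ceil_div u d + count (dvdn d) (iota u l).
  by rewrite -!count_dvdn_iota0 // iotaD count_cat.
by have := ceil_divD_sub u l d d_gt0; rewrite ceil_uD addKn.
Qed.

Lemma sumr_if0_const (V : nmodType) (T : Type) (P : pred T) (a : V) (s : seq T) :
  (\sum_(x <- s) (if P x then 0 else a) = a *+ (size s - count P s))%R.
Proof.
rewrite -(count_predC P s) addKn -iter_addr_0 -big_const_seq [RHS]big_mkcond.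
by apply: eq_bigr => x _ /=; case: (P x).
Qed.

Lemma uniq_map_modn_iota u l r : l <= r -> uniq [seq w %% r | w <- iota u l].
Proof.
move=> l_le; rewrite map_inj_in_uniq ?iota_uniq // => w1 w2.
rewrite !mem_iota => /andP[w1_ge w1_lt] /andP[w2_ge w2_lt].
wlog le21 : w1 w2 w1_ge w1_lt w2_ge w2_lt / w2 <= w1.
  move=> sym; case: (leqP w2 w1) => le; first exact: sym.
  by move=> /esym /sym-> //; apply: ltnW.
move/eqP; rewrite eqn_mod_dvd //.
have [|diff_gt0] := posnP (w1 - w2); first lia.
by move/(dvdn_leq diff_gt0); lia.
Qed.

Lemma big_ord_mem (V : nmodType) n (s : seq nat) (F : nat -> V) :
  uniq s -> all (fun i => i < n) s ->
  (\sum_(x < n | (x : nat) \in s) F x = \sum_(i <- s) F i)%R.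
Proof.
move=> s_uniq /allP s_lt; rewrite -big_mkord -big_filter.
apply/perm_big/uniq_perm; rewrite ?filter_uniq ?iota_uniq // => i.
rewrite mem_filter mem_iota /= subn0.
by apply/andP/idP => [[]|i_in] //; split; last exact: s_lt.
Qed.

Lemma mem_cyc_interval n u l r (x : 'I_n) :
  (x \in cyc_interval n u l r) = ((x : nat) \in [seq w %% r | w <- iota u l]).
Proof.
by rewrite inE; apply/hasP/mapP => -[w w_in]; [move/eqP <- | move ->]; exists w.
Qed.

Lemma big_cyc_interval (V : nmodType) n u l r (F : nat -> V) :
  0 < r <= n -> l <= r ->
  (\sum_(x in cyc_interval n u l r) F x = \sum_(w <- iota u l) F (w %% r)%N)%R.
Proof.
move=> /andP[r_gt0 r_le] l_le.
rewrite (eq_bigl _ _ (mem_cyc_interval n u l r)) big_ord_mem ?big_map //.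
  exact: uniq_map_modn_iota.
apply/allP => _ /mapP[w _ ->]; exact: leq_trans (ltn_pmod w r_gt0) r_le.
Qed.

Lemma yvec_modn d w r x : d %| r -> yvec d w (x %% r) = yvec d w x.
Proof. by move=> d_dvd; rewrite /yvec /dvdn modn_dvdm. Qed.

Local Open Scope ring_scope.

Lemma ysum_cyc_interval n d w u l r : (d %| r)%N -> (0 < r <= n)%N -> (l <= r)%N ->
  ysum d w (cyc_interval n u l r) =
  (l - count (dvdn d) (iota u l))%N%:R / (w * (d - 1))%N%:R.
Proof.
move=> d_dvd r_bounds l_le; rewrite /ysum big_cyc_interval //.
under eq_bigr do rewrite yvec_modn //.
by rewrite sumr_if0_const size_iota div1r mulr_natl.
Qed.

Theorem lemma3p2 (k n : nat) :
  (2 <= k)%N -> (2 ^ k < n)%N ->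
  let c := (2 ^ k - 2)%N in
  let d := gcdn c (n - 1) in
  (1 < d)%N ->
  let w := ((n - 1) %/ d)%N in
  forall (v : 'I_n) (l : nat), (1 <= l <= n - 1)%N ->
    ysum d w (cyc_interval n v l (n - 1)) = (l - l %/ d)%N%:R / (w * (d - 1))%N%:R
    \/ ysum d w (cyc_interval n v l (n - 1)) = (l - ceil_div l d)%N%:R / (w * (d - 1))%N%:R.
Proof.
move=> _ _ c d d_gt1 w v l /andP[l_ge1 l_le].
have d_gt0 : (0 < d)%N := ltnW d_gt1.
have d_dvd : (d %| n - 1)%N := dvdn_gcdr c (n - 1).
rewrite ysum_cyc_interval // ?(leq_trans l_ge1 l_le) ?leq_subr //.
by case: (count_dvdn_iota d v l d_gt0) => ->; [left | right].
Qed.
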